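(* Let $\boldsymbol{f},\bar{\boldsymbol{f}}\in\mathbb{R}^E$ with $\boldsymbol{u}^-_e<\boldsymbol{f}_e<\boldsymbol{u}^+_e$ for all $e$. If $\|\mathbf{L}(\boldsymbol{f})(\boldsymbol{f}-\bar{\boldsymbol{f}})\|_\infty\le\varepsilon$ for some $\varepsilon\le1/100$, then $\boldsymbol{\ell}(\boldsymbol{f})\approx_{1+3\varepsilon}\boldsymbol{\ell}(\bar{\boldsymbol{f}})$.
   Context: $G=(V,E)$ is a directed graph with $m=|E|$ edges; lower/upper capacities $\boldsymbol{u}^-,\boldsymbol{u}^+\in\mathbb{Z}^E$ are integers bounded in absolute value by $U$. $\alpha=1/(1000\log(mU))$. Lengths $\boldsymbol{\ell}(\boldsymbol{f})_e=(\boldsymbol{u}^+_e-\boldsymbol{f}_e)^{-1-\alpha}+(\boldsymbol{f}_e-\boldsymbol{u}^-_e)^{-1-\alpha}$ and $\mathbf{L}(\boldsymbol{f})=\mathrm{diag}(\boldsymbol{\ell}(\boldsymbol{f}))$. For positive vectors, $\boldsymbol{x}\approx_\beta\boldsymbol{y}$ means $\beta^{-1}\boldsymbol{y}_i\le\boldsymbol{x}_i\le\beta\boldsymbol{y}_i$ for all $i$. *)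

From HB Require Import structures.
From mathcomp Require Import all_boot all_order all_algebra.
From mathcomp Require Import reals exp.
Set Implicit Arguments. Unset Strict Implicit. Unset Printing Implicit Defensive.
Import Order.TTheory GRing.Theory Num.Theory.
Local Open Scope ring_scope.

Definition alpha (R : realType) (m U : nat) : R :=
  (1000 * ln ((m * U)%:R : R))^-1.

Definition len (R : realType) (E : finType) (U : nat)
    (um up : E -> int) (f : E -> R) (e : E) : R :=
  powR ((up e)%:~R - f e) (-1 - alpha R #|E| U)
  + powR (f e - (um e)%:~R) (-1 - alpha R #|E| U).

Definition approx_by (R : realType) (E : finType) (beta : R) (x y : E -> R) :=
  forall i, beta^-1 * y i <= x i /\ x i <= beta * y i.

Definition infnorm_le (R : realType) (E : finType) (v : E -> R) (eps : R) :=
  forall e, `|v e| <= eps.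

From HB Require Import structures.
From mathcomp Require Import all_boot all_order all_algebra.
From mathcomp Require Import reals exp.
From mathcomp Require Import ring lra.
Set Implicit Arguments.
Unset Strict Implicit.
Import Order.TTheory GRing.Theory Num.Theory.
Local Open Scope ring_scope.

(* Fix an edge and write s = u+ - f, t = f - u- and d = f - fbar, so that
   l(f) = s^(-1-a) + t^(-1-a) and l(fbar) = (s + d)^(-1-a) + (t - d)^(-1-a).
   The hypothesis gives s^(-1-a) |d| <= eps; since s <= 2U <= (mU)^2 and
   a = 1/(1000 ln (mU)), s^a <= e^(1/500) <= 2, hence |d| <= 2 eps s, and
   likewise |d| <= 2 eps t.  A relative perturbation by 2 eps moves the
   logarithm by at most 2 eps / (1 - 2 eps), and (1 + a) 2 eps / (1 - 2 eps)
   <= ln (1 + 3 eps), so each summand, hence the sum, changes by a factor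
   within 1 + 3 eps. *)

Section LnPowR.
Variable R : realType.
Implicit Types x y q r b p d l eps delta : R.

Lemma ln_le_subr1 x : 0 < x -> ln x <= x - 1.
Proof.
move=> x_gt0; have := @le_ln1Dx R (x - 1).
by rewrite (addrC 1) subrK; apply; lra.
Qed.

Lemma ln_ge_1subV x : 0 < x -> 1 - x^-1 <= ln x.
Proof.
move=> x_gt0; have := @ln_le_subr1 x^-1; rewrite invr_gt0 => /(_ x_gt0).
by rewrite lnV ?posrE //; lra.
Qed.

Lemma norm_ln_le delta q : delta < 1 -> `|q - 1| <= delta ->
  `|ln q| <= delta / (1 - delta).
Proof.
move=> delta_lt1; rewrite ler_norml => /andP[q_lo q_hi].
have q_gt0 : 0 < q by lra.
have -> : delta / (1 - delta) = (1 - delta)^-1 - 1 by field; lra.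
have delta_le : delta <= (1 - delta)^-1 - 1.
  by rewrite lerBrDr -[(1 - delta)^-1]mul1r ler_pdivlMr ?subr_gt0 //; nra.
have inv_q : q^-1 <= (1 - delta)^-1 by rewrite lef_pV2 ?posrE //; lra.
have := ln_le_subr1 q_gt0; have := ln_ge_1subV q_gt0.
rewrite ler_norml; lra.
Qed.

Definition approx_num b x y := b^-1 * y <= x /\ x <= b * y.

Lemma approx_numD b x1 x2 y1 y2 : approx_num b x1 y1 -> approx_num b x2 y2 ->
  approx_num b (x1 + x2) (y1 + y2).
Proof. by rewrite /approx_num !mulrDr; lra. Qed.

Lemma approx_num_powR b r x y : 0 < b -> 0 < x -> 0 < y ->
  `|r * ln (y / x)| <= ln b -> approx_num b (x `^ r) (y `^ r).
Proof.
move=> b_gt0 x_gt0 y_gt0; rewrite ln_div ?posrE // ler_norml => /andP[lo hi].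
rewrite /approx_num /powR !gt_eqF // -{1 2}(lnK b_gt0) -expRN -!expRD !ler_expR.
lra.
Qed.

Lemma ln1D3_ge_exponent_bound p eps :
  0 <= p -> p <= 1/100 -> 0 <= eps -> eps <= 1/100 ->
  (1 + p) * (2 * eps / (1 - 2 * eps)) <= ln (1 + 3 * eps).
Proof.
move=> p_ge0 p_le eps_ge0 eps_le.
apply: le_trans _ (ln_ge_1subV _); last by lra.
set u := (1 - 2 * eps)^-1; set v := (1 + 3 * eps)^-1.
have u_le : u <= 50/49.
  by rewrite /u -[50/49]invrK lef_pV2 ?posrE; lra.
have v_ge : 100/103 <= v.
  by rewrite /v -[100/103]invrK lef_pV2 ?posrE; lra.
have -> : 1 - v = 3 * eps * v by rewrite /v; field; lra.
have pu_le : (1 + p) * u <= 101/100 * (50/49).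
  by apply: ler_pM; rewrite ?invr_ge0 //; lra.
have -> : (1 + p) * (2 * eps * u) = 2 * eps * ((1 + p) * u) by ring.
nra.
Qed.

Lemma approx_num_powR_near eps p x y : 0 <= p -> p <= 1/100 ->
  0 <= eps -> eps <= 1/100 -> 0 < x -> `|y - x| <= 2 * eps * x ->
  approx_num (1 + 3 * eps) (x `^ (-1 - p)) (y `^ (-1 - p)).
Proof.
move=> p_ge0 p_le eps_ge0 eps_le x_gt0 yx_le.
have y_gt0 : 0 < y by move: yx_le; rewrite ler_norml; nra.
have ratio_near : `|y / x - 1| <= 2 * eps.
  have -> : y / x - 1 = (y - x) / x by field; exact: lt0r_neq0.
  by rewrite normrM normfV (gtr0_norm x_gt0) ler_pdivrMr.
apply: approx_num_powR => //; first by lra.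
have -> : -1 - p = - (1 + p) by ring.
have p1_ge0 : 0 <= 1 + p by lra.
rewrite normrM normrN (ger0_norm p1_ge0).
apply: le_trans _ (@ln1D3_ge_exponent_bound p eps p_ge0 p_le eps_ge0 eps_le).
by rewrite ler_wpM2l // norm_ln_le //; lra.
Qed.

Lemma norm_le_of_weighted eps p x l d : 0 < x -> x `^ (-1 - p) <= l ->
  `|l * d| <= eps -> x `^ p <= 2 -> `|d| <= 2 * eps * x.
Proof.
move=> x_gt0 l_ge weighted_le xp_le.
have xp_gt0 : 0 < x `^ p by exact: powR_gt0.
have pow_eq : x `^ (-1 - p) = (x * x `^ p)^-1.
  rewrite -[X in (X * _)^-1](powRr1 (ltW x_gt0)) -powRD ?lt0r_neq0 ?implybT // -powRN.
  by congr (_ `^ _); ring.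
have : `|d| * (x * x `^ p)^-1 <= eps.
  apply: le_trans weighted_le; rewrite -pow_eq normrM mulrC.
  by apply: ler_wpM2r => //; apply: le_trans l_ge (ler_norm _).
rewrite ler_pdivrMr ?mulr_gt0 // => d_le.
apply: le_trans d_le _.
have eps_ge0 : 0 <= eps := le_trans (normr_ge0 _) weighted_le.
have : x * x `^ p <= x * 2 by rewrite ler_pM2l.
nra.
Qed.

End LnPowR.

Lemma sub_le_of_int_bounds (R : realType) (U : nat) (a b : int) (y z : R) :
  `|a| <= U%:Z -> `|b| <= U%:Z -> y <= a%:~R -> b%:~R <= z -> y - z <= 2 * U%:R.
Proof.
rewrite !ler_norml => /andP[_ a_le] /andP[b_ge _] y_le z_ge.
have : a%:~R <= U%:R :> R by rewrite -(ler_int R) in a_le.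
have : - U%:R <= b%:~R :> R by rewrite -(ler_int R) mulrNz in b_ge.
lra.
Qed.

Lemma double_le_sqr (m U : nat) : (1 < m * U)%N -> (2 * U <= (m * U) ^ 2)%N.
Proof.
move=> mU_gt1; rewrite expnS expn1 leq_mul //.
by rewrite leq_pmull // lt0n; apply: contraTneq mU_gt1 => ->.
Qed.

Section Alpha.
Variables (R : realType) (m U : nat).
Hypothesis mU_gt1 : (1 < m * U)%N.

Let N : R := (m * U)%:R.

Lemma ln_mU_ge_half : 1/2 <= ln N.
Proof.
have N_ge2 : 2 <= N by rewrite /N ler_nat.
apply: le_trans _ (ln_ge_1subV _); last by lra.
have : N^-1 <= 2^-1 by rewrite lef_pV2 ?posrE //; lra.
lra.
Qed.

Lemma alpha_gt0 : 0 < alpha R m U.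
Proof. by rewrite invr_gt0; have := ln_mU_ge_half; lra. Qed.

Lemma alpha_le : alpha R m U <= 1/100.
Proof.
rewrite /alpha -[1/100]invrK lef_pV2 ?posrE; have := ln_mU_ge_half; lra.
Qed.

Lemma powR_alpha_le2 x : 0 < x -> x <= ((m * U) ^ 2)%:R -> x `^ alpha R m U <= 2.
Proof.
move=> x_gt0 x_le; rewrite /powR gt_eqF // -[2]lnK ?posrE // ler_expR.
have N_gt0 : 0 < N by rewrite /N ltr0n (ltn_trans _ mU_gt1).
have lnx_le : ln x <= ln N *+ 2.
  by rewrite -lnXn // ler_ln ?posrE ?exprn_gt0 // /N -natrX.
have ln2_ge : 1/2 <= ln (2 : R).
  have := @ln_ge_1subV R 2; rewrite ltr0n => /(_ isT); lra.
have : alpha R m U * ln x <= alpha R m U * (ln N *+ 2).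
  by apply: ler_wpM2l => //; exact: ltW alpha_gt0.
have -> : alpha R m U * (ln N *+ 2) = 1/500.
  by rewrite /alpha -/N; field; have := ln_mU_ge_half; lra.
lra.
Qed.

End Alpha.

Unset Implicit Arguments.

Theorem lemma4p9 (R : realType) (V E : finType) (head tail : E -> V)
    (U : nat) (hmU : (1 < #|E| * U)%N) (um up : E -> int)
    (hU : forall e, `|um e| <= U%:Z /\ `|up e| <= U%:Z)
    (f fbar : E -> R) (eps : R)
    (hf : forall e, (um e)%:~R < f e /\ f e < (up e)%:~R)
    (heps : eps <= 1 / 100)
    (hnorm : infnorm_le (fun e => len U um up f e * (f e - fbar e)) eps) :
  approx_by (1 + 3 * eps) (len U um up f) (len U um up fbar).
Proof.
move=> e; set p := alpha R #|E| U.
have p_gt0 : 0 < p := alpha_gt0 R hmU.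
have eps_ge0 : 0 <= eps := le_trans (normr_ge0 _) (hnorm e).
have [[um_lt up_gt] [um_le up_le]] := (hf e, hU e).
have powR_p_le2 x : 0 < x -> x <= 2 * U%:R -> x `^ p <= 2.
  move=> x_gt0 x_le; apply: powR_alpha_le2 => //; apply: le_trans x_le _.
  by rewrite -[2]/(2%:R) -natrM ler_nat double_le_sqr.
set s := (up e)%:~R - f e; set t := f e - (um e)%:~R.
have s_gt0 : 0 < s by rewrite subr_gt0.
have t_gt0 : 0 < t by rewrite subr_gt0.
have len_f : len U um up f e = s `^ (-1 - p) + t `^ (-1 - p) by [].
have ds : `|f e - fbar e| <= 2 * eps * s.
  apply: (@norm_le_of_weighted _ _ p _ _ _ s_gt0 _ (hnorm e)).
    by rewrite len_f lerDl powR_ge0.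
  by apply: powR_p_le2 => //; apply: sub_le_of_int_bounds up_le um_le _ _; lra.
have dt : `|f e - fbar e| <= 2 * eps * t.
  apply: (@norm_le_of_weighted _ _ p _ _ _ t_gt0 _ (hnorm e)).
    by rewrite len_f lerDr powR_ge0.
  by apply: powR_p_le2 => //; apply: sub_le_of_int_bounds up_le um_le _ _; lra.
rewrite len_f; apply: approx_numD; apply: approx_num_powR_near => //;
  rewrite ?(ltW p_gt0) ?alpha_le //.
  by congr (`|_| <= _): ds; rewrite /s; ring.
by rewrite -normrN; congr (`|_| <= _): dt; rewrite /t; ring.
Qed.
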